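(* Let $\sigma\in S_6$ and let $B:\Delta_0\to\Delta_0$ be a projective linear automorphism of the line $\Delta_0$ such that $B(\mathfrak p_i)=\mathfrak p_{\sigma(i)}$ for $1\le i\le6$. Then there exists a unique $A\in\mathrm{GL}_0(\mathcal S)$ with $A|_{\Delta_0}=B$.
   Context: Work over an algebraically closed field of characteristic $\neq2$. $F(X)=\sum_{i=0}^6f_iX^i$, $f_6\neq0$, distinct roots $\theta_1,\dots,\theta_6$. $P_j(X)=\prod_{i\ne j}(X-\theta_i)$, $\omega_j=P_j(\theta_j)$. Points of $\mathbb P^5$ are identified with $P(X)=\sum_{j=0}^5p_jX^j$; $\pi_j=P(\theta_j)/\omega_j$. $\mathcal S\subset\mathbb P^5$ is defined by $\sum_j\theta_j^i\omega_j\pi_j^2=0$, $i=0,1,2$. $\Delta_0=\{(p_0:p_1:0:0:0:0)\}\subset\mathcal S$ and $\mathfrak p_i=(-\theta_i:1:0:0:0:0)\in\Delta_0$ (the polynomial $X-\theta_i$). $\mathrm{GL}(\mathcal S)$ is the group of automorphisms of $\mathcal S$ which are restrictions of projective linear transformations of $\mathbb P^5$, and $\mathrm{GL}_0(\mathcal S)=\{A\in\mathrm{GL}(\mathcal S):A(\Delta_0)=\Delta_0\}$. *)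

From HB Require Import structures.
From mathcomp Require Import all_boot all_order all_algebra all_fingroup.
Set Implicit Arguments. Unset Strict Implicit. Unset Printing Implicit Defensive.
Import Order.TTheory GRing.Theory.
Local Open Scope ring_scope.

Section Defs.
Variable K : fieldType.
Variable theta : 'I_6 -> K.

(* Points of P^5 = nonzero row vectors (p_0,...,p_5) up to nonzero scalars;
   the vector v stands for the polynomial P(X) = \sum_j v_j X^j. *)
Definition proj_eq (n : nat) (u v : 'rV[K]_n) : Prop :=
  exists2 c : K, c != 0 & u = c *: v.

Definition Pval (v : 'rV[K]_6) (x : K) : K := \sum_(j < 6) v 0 j * x ^+ j.

(* omega_j = P_j(theta_j), P_j = \prod_{i <> j} (X - theta_i) *)
Definition omega (j : 'I_6) : K := \prod_(i < 6 | i != j) (theta j - theta i).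

Definition piS (v : 'rV[K]_6) (j : 'I_6) : K := Pval v (theta j) / omega j.

Definition inS (v : 'rV[K]_6) : Prop :=
  v != 0 /\
  forall i : nat, (i < 3)%N ->
    \sum_(j < 6) theta j ^+ i * omega j * piS v j ^+ 2 = 0.

Definition inDelta0 (v : 'rV[K]_6) : Prop :=
  v != 0 /\ forall j : 'I_6, (2 <= j)%N -> v 0 j = 0.

Definition embD (u : 'rV[K]_2) : 'rV[K]_6 :=
  \row_(j < 6) (if (j < 2)%N then u 0 (inord j) else 0).

(* p_i = X - theta_i, in the coordinates (p0:p1) of Delta_0 *)
Definition ptD (i : 'I_6) : 'rV[K]_2 :=
  \row_(j < 2) (if j == 0 :> nat then - theta i else 1).

(* The invertible matrix M (acting on rows, v |-> v *m M) induces an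
   element of GL(S): the projective transformation maps S onto S. *)
Definition inGL_S (M : 'M[K]_6) : Prop :=
  M \in unitmx /\
  (forall v, inS v -> inS (v *m M)) /\
  (forall w, inS w -> exists2 v, inS v & proj_eq (v *m M) w).

Definition inGL0_S (M : 'M[K]_6) : Prop :=
  inGL_S M /\
  (forall v, inDelta0 v -> inDelta0 (v *m M)) /\
  (forall w, inDelta0 w -> exists2 v, inDelta0 v & proj_eq (v *m M) w).

(* A|_{Delta_0} = B, where B is induced by the invertible 2x2 matrix N *)
Definition restricts_to (M : 'M[K]_6) (N : 'M[K]_2) : Prop :=
  forall u : 'rV[K]_2, u != 0 -> proj_eq (embD u *m M) (embD (u *m N)).

End Defs.

From HB Require Import structures.
From mathcomp Require Import all_boot all_order all_algebra all_fingroup.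
From mathcomp Require Import ring.
Set Implicit Arguments.
Unset Strict Implicit.
Unset Printing Implicit Defensive.
Import GRing.Theory.
Local Open Scope ring_scope.

(* Everything is done in the coordinates pi_j = P(theta_j) / omega_j, i.e.
   pi = v *m Phi, where Phi is invertible by Lagrange interpolation.  There
   S is the intersection of the three diagonal quadrics
   sum_j theta_j^m omega_j pi_j^2 = 0 (m = 0, 1, 2), and Delta_0 lies on them
   by the residue identity sum_j theta_j^k / omega_j = 0 (k <= 4).

   Existence: writing B(X - theta_i) = lam_i (X - theta_(sigma i)), the
   monomial matrix T0 : pi_i |-> kap_i pi_(sigma i) (suitable kap_i) turns
   the quadrics into combinations of each other and induces B on Delta_0;
   conjugating back by Phi gives the required A (conj_inGL0).

   Uniqueness: for two extensions A1, A2, the matrix A1 A2^-1 in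
   pi-coordinates maps the quadrics into themselves and fixes Delta_0
   pointwise.  Polarizing along sign changes of the coordinates shows that
   its rows are mutually orthogonal for the three forms, which forces it to
   be monomial, and fixing Delta_0 forces it to be scalar (Rigidity). *)

Section InvertibleMatrix.
Variables (K : fieldType) (n : nat) (T : 'M[K]_n).
Hypothesis T_unit : T \in unitmx.

Lemma unitmx_col_eq0 (y : 'cV[K]_n) : T *m y = 0 -> y = 0.
Proof. by move=> Ty0; rewrite -(mulKmx T_unit y) Ty0 mulmx0. Qed.

Lemma unitmx_row_eq0 (x : 'rV[K]_n) : x *m T = 0 -> x = 0.
Proof. by move=> xT0; rewrite -(mulmxK T_unit x) xT0 mul0mx. Qed.

Lemma unitmx_row_neq0 j : row j T != 0.
Proof.
apply/eqP; rewrite rowE => /unitmx_row_eq0/matrixP/(_ 0 j).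
by rewrite !mxE !eqxx => /eqP; rewrite oner_eq0.
Qed.

Lemma unitmx_col_neq0 a : exists j, T j a != 0.
Proof.
case: (pickP (fun j => T j a != 0)) => [j|col0]; first by exists j.
have : T *m delta_mx a (0 : 'I_1) = 0.
  by apply/colP => j; rewrite -colE !mxE; apply/eqP/negbFE/col0.
by move/unitmx_col_eq0/colP/(_ a); rewrite !mxE !eqxx => /eqP; rewrite oner_eq0.
Qed.

(* If no row has two nonzero entries, no column has two nonzero entries:
   otherwise a combination of two rows would vanish. *)
Lemma col_single_support :
  (forall j a b, T j a != 0 -> T j b != 0 -> a = b) ->
  forall a j k, T j a != 0 -> T k a != 0 -> j = k.
Proof.
move=> rows a j k hj hk; apply/eqP/negPn/negP => jk.
have : (T k a *: delta_mx 0 j - T j a *: delta_mx 0 k : 'rV[K]_n) *m T = 0.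
  apply/rowP => b; rewrite mulmxBl -!scalemxAl -!rowE !mxE.
  have [->|ba] := eqVneq b a; first by rewrite mulrC subrr.
  have off i : T i a != 0 -> T i b = 0.
    by move=> hi; apply/eqP/negPn/negP => /(rows _ _ _ hi) ab; rewrite ab eqxx in ba.
  by rewrite (off _ hj) (off _ hk) !mulr0 subrr.
move/unitmx_row_eq0/rowP/(_ j); rewrite !mxE !eqxx (negbTE jk) /=.
by rewrite mulr1 mulr0 subr0 => /eqP; rewrite (negbTE hk).
Qed.

Lemma mulmx_single_col (x : 'rV[K]_n) a j :
  (forall k, T k a != 0 -> k = j) -> (x *m T) 0 a = x 0 j * T j a.
Proof.
move=> col; rewrite mxE (bigD1 j) //= big1 ?addr0 // => i ij.
have /eqP -> : T i a == 0 by apply: contraR ij => /col ->.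
by rewrite mulr0.
Qed.

End InvertibleMatrix.

Section ProjectiveLine.
Variable K : fieldType.

Lemma proj_eq_refl n (x : 'rV[K]_n) : proj_eq x x.
Proof. by exists 1; rewrite ?oner_neq0 ?scale1r. Qed.

Lemma unitmx_row_neq0_mul n (A : 'M[K]_n) (v : 'rV[K]_n) :
  A \in unitmx -> v != 0 -> v *m A != 0.
Proof. by move=> A_unit; apply: contra => /eqP/(unitmx_row_eq0 A_unit)/eqP. Qed.

Lemma embD_inDelta0 (u : 'rV[K]_2) : u != 0 -> inDelta0 (embD u).
Proof.
move=> u0; split=> [|j j2]; last by rewrite mxE ltnNge j2.
apply: contra u0 => /eqP/rowP embD0; apply/eqP/rowP => k.
have := embD0 (widen_ord (isT : (2 <= 6)%N) k); rewrite !mxE /= ltn_ord => <-.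
by congr (u 0 _); apply/val_inj; rewrite /= inordK.
Qed.

Lemma inDelta0_embD (v : 'rV[K]_6) : inDelta0 v -> exists2 u, u != 0 & v = embD u.
Proof.
move=> [v0 v2]; pose u : 'rV[K]_2 := \row_(k < 2) v 0 (inord k).
have vu : v = embD u.
  apply/rowP => j; rewrite !mxE; case: ifP => [j2|/negbT]; first by rewrite inordK // inord_val.
  by rewrite -leqNgt => /v2.
exists u => //; apply: contra v0 => /eqP u0; apply/eqP/rowP => j.
by rewrite vu u0 !mxE; case: ifP.
Qed.

End ProjectiveLine.

Lemma binary_quadratic_sums (R : comNzRingType) (I : finType) (w x y : I -> R) (a b c d : R) :
  (forall m, (m < 3)%N -> \sum_i w i * (x i ^+ (2 - m) * y i ^+ m) = 0) ->
  forall r, (r < 3)%N ->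
  \sum_i w i * ((a * x i + b * y i) ^+ (2 - r) * (c * x i + d * y i) ^+ r) = 0.
Proof.
move=> h r hr.
have [e0 [e1 [e2 he]]] : exists e0 e1 e2, forall i,
    (a * x i + b * y i) ^+ (2 - r) * (c * x i + d * y i) ^+ r =
    e0 * (x i ^+ 2 * y i ^+ 0) + e1 * (x i ^+ 1 * y i ^+ 1) + e2 * (x i ^+ 0 * y i ^+ 2).
  case: r hr => [|[|[|]]] // _.
  - by exists (a ^+ 2), (2%:R * a * b), (b ^+ 2) => i; ring.
  - by exists (a * c), (a * d + b * c), (b * d) => i; ring.
  - by exists (c ^+ 2), (2%:R * c * d), (d ^+ 2) => i; ring.
transitivity (e0 * \sum_i w i * (x i ^+ (2 - 0) * y i ^+ 0) +
              e1 * \sum_i w i * (x i ^+ (2 - 1) * y i ^+ 1) +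
              e2 * \sum_i w i * (x i ^+ (2 - 2) * y i ^+ 2)).
  by rewrite !mulr_sumr -!big_split; apply: eq_bigr => i _ /=; rewrite he; ring.
by rewrite !h // !mulr0 !addr0.
Qed.

Lemma third_index n (j k : 'I_n) : (2 < n)%N -> exists c : 'I_n, (c != j) && (c != k).
Proof.
move=> n_gt2; case: (pickP (fun c => (c != j) && (c != k))) => [c hc|none].
  by exists c.
have : (#|'I_n| <= #|[set j; k]|)%N.
  apply/subset_leq_card/subsetP => c _.
  by rewrite !inE -[c == j]negbK -[c == k]negbK -negb_and none.
by rewrite cards2 card_ord leqNgt (leq_trans _ n_gt2) //; case: (j != k).
Qed.

Section Coordinates.
Variable K : fieldType.
Variable theta : 'I_6 -> K.
Hypothesis theta_inj : injective theta.

Lemma omega_neq0 j : omega theta j != 0.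
Proof.
by apply/prodf_neq0 => i hij; rewrite subr_eq0; apply: contra hij => /eqP/theta_inj ->.
Qed.

Lemma poly_eq0_at_theta (p : {poly K}) :
  (size p <= 6)%N -> (forall j, root p (theta j)) -> p = 0.
Proof.
move=> sp hroot; apply/eqP; apply/negPn/negP => p_nz.
have hall : all (root p) [seq theta i | i <- enum 'I_6].
  by apply/allP => x /mapP [j _ ->].
have huniq : uniq [seq theta i | i <- enum 'I_6] by rewrite map_inj_uniq ?enum_uniq.
have := max_poly_roots p_nz hall huniq.
by rewrite size_map size_enum_ord ltnNge sp.
Qed.

Definition Phi : 'M[K]_6 := \matrix_(k < 6, j < 6) (theta j ^+ k / omega theta j).

Lemma piS_Phi v j : piS theta v j = (v *m Phi) 0 j.
Proof.
rewrite /piS /Pval mxE mulr_suml; apply: eq_bigr => k _.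
by rewrite mxE mulrA.
Qed.

(* Phi is invertible: v *m Phi = 0 means that the polynomial of degree < 6
   with coefficients v vanishes at the six theta_j. *)
Lemma Phi_unit : Phi \in unitmx.
Proof.
rewrite -row_free_unit; apply: inj_row_free => v vPhi0.
pose p : {poly K} := \poly_(k < 6) v 0 (inord k).
have p0 : p = 0.
  apply: poly_eq0_at_theta; first exact: size_poly.
  move=> j; apply/rootP; rewrite horner_poly.
  have := congr1 (fun w : 'rV[K]_6 => w 0 j * omega theta j) vPhi0.
  rewrite !mxE mul0r mulr_suml => h; apply: etrans h; apply: eq_bigr => k _.
  by rewrite mxE inord_val -mulrA divfK ?omega_neq0.
apply/rowP => k; have := congr1 (fun q : {poly K} => q`_k) p0.
by rewrite coef_poly ltn_ord inord_val coef0 mxE.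
Qed.

(* The residue identity: sum_j theta_j^k / omega_j = 0 for k <= 4.  The
   Lagrange interpolant sum_j (theta_j^k / omega_j) P_j of X^k is X^k itself,
   and the left-hand side is its coefficient of X^5. *)
Lemma sum_pow_div_omega k : (k <= 4)%N -> \sum_(j < 6) theta j ^+ k / omega theta j = 0.
Proof.
move=> hk.
pose P (j : 'I_6) : {poly K} := \prod_(i < 6 | i != j) ('X - (theta i)%:P).
pose G := \sum_(j < 6) (theta j ^+ k / omega theta j) *: P j.
have sizeP j : size (P j) = 6%N.
  rewrite /P -big_filter size_prod_XsubC size_filter.
  have h := cardC1 j; rewrite card_ord /= in h.
  by apply/eqP; rewrite eqSS; apply/eqP; rewrite -[RHS]h cardE /enum_mem size_filter.
have G_theta l : G.[theta l] = theta l ^+ k.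
  rewrite horner_sum (bigD1 l) //= big1 ?addr0.
    rewrite hornerZ horner_prod.
    under eq_bigr do rewrite hornerXsubC.
    by rewrite -/(omega theta l) divfK ?omega_neq0.
  move=> j hjl; rewrite hornerZ horner_prod (bigD1 l) /=; last by rewrite eq_sym.
  by rewrite hornerXsubC subrr mul0r mulr0.
have GX : G = 'X^k.
  apply/eqP; rewrite -subr_eq0; apply/eqP/poly_eq0_at_theta => [|j].
    rewrite (leq_trans (size_polyD _ _)) // size_polyN size_polyXn geq_max.
    rewrite (leq_ltn_trans hk) // andbT (leq_trans (size_sum _ _ _)) //.
    by apply/bigmax_leqP => j _; rewrite (leq_trans (size_scale_leq _ _)) ?sizeP.
  by rewrite /root hornerD hornerN G_theta hornerXn subrr.
have := congr1 (fun q : {poly K} => q`_5) GX.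
rewrite coefXn coef_sum gtn_eqF ?ltnS // mulr0n => h; apply: etrans h.
apply: eq_bigr => j _; rewrite coefZ.
have : lead_coef (P j) = 1 by apply/monicP/monic_prod_XsubC.
by rewrite lead_coefE sizeP => ->; rewrite mulr1.
Qed.

Definition bform (m : nat) (p q : 'rV[K]_6) : K :=
  \sum_j theta j ^+ m * omega theta j * (p 0 j * q 0 j).

Definition on_quadrics (p : 'rV[K]_6) : Prop :=
  forall m, (m < 3)%N -> bform m p p = 0.

Lemma inS_Phi v : inS theta v <-> v != 0 /\ on_quadrics (v *m Phi).
Proof.
have e m : \sum_(j < 6) theta j ^+ m * omega theta j * piS theta v j ^+ 2 =
           bform m (v *m Phi) (v *m Phi).
  by apply: eq_bigr => j _; rewrite piS_Phi expr2.
by split=> -[v0 hq]; split=> // m hm; rewrite ?e ?hq // -e hq.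
Qed.

Lemma bformZ m a b p q : bform m (a *: p) (b *: q) = a * b * bform m p q.
Proof. by rewrite /bform mulr_sumr; apply: eq_bigr => j _; rewrite !mxE; ring. Qed.

Lemma on_quadricsZ a p : on_quadrics p -> on_quadrics (a *: p).
Proof. by move=> hp m hm; rewrite bformZ hp ?mulr0. Qed.

Lemma embD_Phi (u : 'rV[K]_2) j :
  (embD u *m Phi) 0 j = (u 0 0 + u 0 1 * theta j) / omega theta j.
Proof.
rewrite mxE !big_ord_recl big_ord0 !mxE /=.
have -> : inord 0 = 0 :> 'I_2 by apply/val_inj; rewrite /= inordK.
have -> : inord 1 = 1 :> 'I_2 by apply/val_inj; rewrite /= inordK.
by rewrite !mul0r !addr0 expr0 expr1 mulrDl mul1r mulrA.
Qed.

(* Delta_0 lies on S: each quadric evaluates to a combination of the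
   vanishing residue sums of sum_pow_div_omega. *)
Lemma on_quadrics_embD u : on_quadrics (embD u *m Phi).
Proof.
move=> m hm; rewrite /bform.
have term j : theta j ^+ m * omega theta j *
    ((embD u *m Phi) 0 j * (embD u *m Phi) 0 j) =
  u 0 0 ^+ 2 * (theta j ^+ m / omega theta j) +
  2%:R * u 0 0 * u 0 1 * (theta j ^+ m.+1 / omega theta j) +
  u 0 1 ^+ 2 * (theta j ^+ m.+2 / omega theta j).
  rewrite embD_Phi !exprS; move: (theta j ^+ m) (omega_neq0 j) => t w_nz.
  by field.
rewrite (eq_bigr _ (fun j _ => term j)) !big_split /= -!mulr_sumr.
have hm2 : (m.+2 <= 4)%N := hm.
by rewrite !sum_pow_div_omega ?mulr0 ?addr0 // ?(ltnW hm2) ?(ltnW (ltnW hm2)).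
Qed.

Lemma ptD_Phi c b : (embD (ptD theta c) *m Phi) 0 b = (theta b - theta c) / omega theta b.
Proof. by rewrite embD_Phi !mxE /= mul1r addrC. Qed.

Lemma ptD_Phi_eq0 c b : ((embD (ptD theta c) *m Phi) 0 b == 0) = (b == c).
Proof.
rewrite ptD_Phi mulf_eq0 invr_eq0 (negbTE (omega_neq0 b)) orbF subr_eq0.
by rewrite (inj_eq theta_inj).
Qed.

Lemma ptD_neq0 c : ptD theta c != 0.
Proof. by apply/eqP => /rowP/(_ 1); rewrite !mxE /= => /eqP; rewrite oner_eq0. Qed.

Lemma bform_four_points m u A B :
  bform m u u - bform m (u - A) (u - A) - bform m (u - B) (u - B)
  + bform m (u - A - B) (u - A - B) = 2%:R * bform m A B.
Proof.
rewrite /bform -!sumrB -big_split mulr_sumr; apply: eq_bigr => j _.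
by rewrite /= !mxE; move: (theta j ^+ m) => t; ring.
Qed.

(* The reflection negating the j-th pi-coordinate; the quadrics are
   diagonal, hence invariant under it. *)
Definition flip (j : 'I_6) (p : 'rV[K]_6) : 'rV[K]_6 :=
  p - (2%:R * p 0 j) *: delta_mx 0 j.

Lemma flip_entry j p b : flip j p 0 b = if b == j then - p 0 j else p 0 b.
Proof. by rewrite !mxE eqxx /=; case: eqP => [->|_]; rewrite ?mulr1n ?mulr0n; ring. Qed.

Lemma on_quadrics_flip j p : on_quadrics p -> on_quadrics (flip j p).
Proof.
move=> hp m hm; rewrite -(hp m hm); apply: eq_bigr => b _.
by rewrite flip_entry; case: eqP => [->|]; rewrite ?mulrNN.
Qed.

Lemma flip_mulmx j p (T : 'M[K]_6) :
  flip j p *m T = p *m T - (2%:R * p 0 j) *: row j T.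
Proof. by rewrite mulmxBl -scalemxAl -rowE. Qed.

(* The polarization above
   shows that distinct rows of T are orthogonal for all three forms, which
   forces T to be monomial; fixing the points of Delta_0 then forces T to
   be diagonal with equal entries. *)
Section Rigidity.
Hypothesis two_neq0 : (2%:R : K) != 0.
Variable T : 'M[K]_6.
Hypothesis T_unit : T \in unitmx.
Hypothesis T_quadrics : forall p, on_quadrics p -> on_quadrics (p *m T).
Hypothesis T_fixes :
  forall u, u != 0 -> proj_eq (embD u *m Phi *m T) (embD u *m Phi).

(* Any two indices j, k leave a third index c; the point p_c has nonzero
   coordinates x_j, x_k, and the four points x, flip_j x, flip_k x and
   flip_j (flip_k x) on the quadrics are mapped by T onto the quadrics. *)
Lemma orthogonal_rows j k : j != k ->
  forall m, (m < 3)%N -> bform m (row j T) (row k T) = 0.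
Proof.
move=> jk m hm.
have [c /andP [cj ck]] := third_index j k (isT : (2 < 6)%N).
pose x := embD (ptD theta c) *m Phi.
have xj : x 0 j != 0 by rewrite ptD_Phi_eq0 eq_sym.
have xk : x 0 k != 0 by rewrite ptD_Phi_eq0 eq_sym.
have on_x : on_quadrics x := on_quadrics_embD _.
pose A := (2%:R * x 0 j) *: row j T.
pose B := (2%:R * x 0 k) *: row k T.
have flip_kj : flip j (flip k x) *m T = x *m T - A - B.
  by rewrite flip_mulmx flip_entry (negbTE jk) flip_mulmx addrAC.
have Q p : on_quadrics p -> bform m (p *m T) (p *m T) = 0 by move/T_quadrics; apply.
have := bform_four_points m (x *m T) A B.
have on_j := on_quadrics_flip j on_x; have on_k := on_quadrics_flip k on_x.
rewrite -flip_kj -!flip_mulmx (Q _ on_x) (Q _ on_j) (Q _ on_k).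
rewrite (Q _ (on_quadrics_flip j on_k)) !subr0 addr0 bformZ => /esym/eqP.
by rewrite !mulf_eq0 (negbTE two_neq0) (negbTE xj) (negbTE xk) => /eqP.
Qed.

(* Each row of T has a single nonzero entry: with Z_m = bform m (row j T)
   (row j T), the column ((c0 + c1 theta_a) omega_a T_ja)_a is sent by T to
   (c0 Z_0 + c1 Z_1) e_j, so invertibility gives Z_0 != 0 and
   theta_a = Z_1 / Z_0 on the support of row j. *)
Lemma row_single_support j a b : T j a != 0 -> T j b != 0 -> a = b.
Proof.
pose Z m := bform m (row j T) (row j T).
have Ty c0 c1 :
  T *m (\col_a ((c0 + c1 * theta a) * omega theta a * T j a)) =
  (c0 * Z 0%N + c1 * Z 1%N) *: delta_mx j 0.
  apply/colP => k; rewrite !mxE.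
  transitivity (c0 * bform 0 (row k T) (row j T) + c1 * bform 1 (row k T) (row j T)).
    rewrite /bform !mulr_sumr -big_split; apply: eq_bigr => i _; rewrite /= !mxE; ring.
  have [->|kj] := eqVneq k j; first by rewrite eqxx mulr1.
  by rewrite !orthogonal_rows // !mulr0 addr0.
have Z0 : Z 0%N != 0.
  apply: contra (unitmx_row_neq0 T_unit j) => /eqP Z0; apply/eqP/rowP => i.
  have := Ty 1 0; rewrite Z0 mulr0 mul0r addr0 scale0r.
  move/(unitmx_col_eq0 T_unit)/colP/(_ i); rewrite !mxE mul0r addr0 mul1r.
  by move/eqP; rewrite mulf_eq0 (negbTE (omega_neq0 i)) => /eqP.
have theta_support i : T j i != 0 -> theta i = Z 1%N / Z 0%N.
  move=> ji; have := Ty (- Z 1%N) (Z 0%N).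
  have -> : - Z 1%N * Z 0%N + Z 0%N * Z 1%N = 0 by ring.
  rewrite scale0r => /(unitmx_col_eq0 T_unit)/colP/(_ i); rewrite !mxE => /eqP.
  rewrite !mulf_eq0 (negbTE ji) (negbTE (omega_neq0 i)) !orbF addrC subr_eq0.
  by move=> /eqP h; apply: (mulfI Z0); rewrite mulrCA divff // mulr1.
by move=> ja jb; apply: theta_inj; rewrite !theta_support.
Qed.

Lemma scalar_of_fixing_Delta0 : exists2 l : K, l != 0 & T = l%:M.
Proof.
have cols := col_single_support T_unit row_single_support.
have entry (x : 'rV[K]_6) a j : T j a != 0 -> (x *m T) 0 a = x 0 j * T j a.
  by move=> ja; apply: mulmx_single_col => k /cols; apply.
(* fixing p_j, whose j-th coordinate vanishes, puts row j on the diagonal *)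
have diag a j : T j a != 0 -> j = a.
  move=> ja; have [l l0] := T_fixes (ptD_neq0 j).
  move/rowP/(_ a); rewrite [RHS]mxE (entry _ _ _ ja).
  move: (ptD_Phi_eq0 j j); rewrite eqxx => /eqP ->; rewrite mul0r => /esym/eqP.
  by rewrite mulf_eq0 (negbTE l0) ptD_Phi_eq0 eq_sym => /eqP.
have Tdiag a : T a a != 0.
  by have [j ja] := unitmx_col_neq0 T_unit a; move: (ja); rewrite (diag _ _ ja).
(* fixing the point 1 = (1 : 0) makes the diagonal constant *)
have one_neq0 : delta_mx 0 0 != 0 :> 'rV[K]_2.
  by apply/eqP => /rowP/(_ 0); rewrite !mxE /= => /eqP; rewrite oner_eq0.
have [l l0 hl] := T_fixes one_neq0.
exists l => //; apply/matrixP => i j; rewrite mxE.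
have [<-|ij] := eqVneq i j; last first.
  by rewrite mulr0n; apply/eqP; apply: contraR ij => /diag/eqP.
move/rowP/(_ i): hl; rewrite [RHS]mxE (entry _ _ _ (Tdiag i)) embD_Phi !mxE /=.
rewrite mul0r addr0 mul1r mulr1n [l * _]mulrC.
exact/mulfI/invr_neq0/omega_neq0.
Qed.

End Rigidity.

Section Existence.
Variable sigma : 'S_6.
Variable N : 'M[K]_2.
Hypothesis hB : forall i, proj_eq (ptD theta i *m N) (ptD theta (sigma i)).

(* lam i is the X-coefficient of B(X - theta_i); detN is det N. *)
Definition lam (i : 'I_6) : K := N 1 1 - theta i * N 0 1.
Definition detN : K := N 0 0 * N 1 1 - N 0 1 * N 1 0.

Lemma mulmxN_entry (u : 'rV[K]_2) k : (u *m N) 0 k = u 0 0 * N 0 k + u 0 1 * N 1 k.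
Proof.
rewrite mxE !big_ord_recl big_ord0 addr0.
by have -> : lift ord0 ord0 = 1 :> 'I_2 by apply/val_inj.
Qed.

(* Comparing both coordinates of B(X - theta_i) = k (X - theta_(sigma i)):
   k = lam i, and the constant term gives theta_(sigma i) lam_i. *)
Lemma lam_image i : lam i != 0 /\ theta (sigma i) * lam i = theta i * N 0 0 - N 1 0.
Proof.
have [k k0 hk] := hB i.
move: (congr1 (fun u : 'rV[K]_2 => u 0 0) hk) (congr1 (fun u : 'rV[K]_2 => u 0 1) hk).
rewrite !mulmxN_entry !mxE /= !mul1r !mulr1 => h0 h1.
have -> : lam i = k by rewrite /lam -h1; ring.
have -> : theta (sigma i) * k = - (k * - theta (sigma i)) by ring.
by split=> //; rewrite -h0; ring.
Qed.

Lemma lam_neq0 i : lam i != 0. Proof. by case: (lam_image i). Qed.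

Lemma theta_sigma_lam i : theta (sigma i) * lam i = theta i * N 0 0 - N 1 0.
Proof. by case: (lam_image i). Qed.

Lemma detN_diff i l :
  detN * (theta i - theta l) = lam i * lam l * (theta (sigma i) - theta (sigma l)).
Proof.
have -> : lam i * lam l * (theta (sigma i) - theta (sigma l)) =
   lam l * (theta (sigma i) * lam i) - lam i * (theta (sigma l) * lam l) by ring.
by rewrite !theta_sigma_lam /lam /detN; ring.
Qed.

(* B is not constant, as it separates p_0 and p_1. *)
Lemma detN_neq0 : detN != 0.
Proof.
apply/eqP => d0; have := detN_diff 0 1; rewrite d0 mul0r => /esym/eqP.
rewrite !mulf_eq0 !(negbTE (lam_neq0 _)) /= subr_eq0 => /eqP/theta_inj/perm_inj.
by move/(congr1 val).
Qed.

Definition lam_prod (i : 'I_6) : K := \prod_(l < 6 | l != i) lam l.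

Lemma lam_prod_neq0 i : lam_prod i != 0.
Proof. by apply/prodf_neq0 => l _; apply: lam_neq0. Qed.

(* Transforming omega: multiply detN_diff over the five l != i. *)
Lemma omega_sigma i :
  omega theta (sigma i) * (lam i ^+ 5 * lam_prod i) = detN ^+ 5 * omega theta i.
Proof.
have card5 : #|[pred l : 'I_6 | l != i]| = 5%N.
  by have := cardC1 i; rewrite card_ord.
rewrite /omega (reindex_inj (@perm_inj _ sigma)) /=.
under [X in X * _]eq_bigl do rewrite (inj_eq (@perm_inj _ sigma)).
rewrite -[in lam i ^+ 5]card5 -[in detN ^+ 5]card5 -!prodr_const /lam_prod -!big_split /=.
by apply: eq_bigr => l _; rewrite detN_diff; ring.
Qed.

(* The weights of T0, chosen so that the quadrics are transformed into
   combinations of each other and T0 induces B on Delta_0. *)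
Definition kap (i : 'I_6) : K :=
  detN * omega theta i / (lam i * omega theta (sigma i)).

Lemma kap_neq0 i : kap i != 0.
Proof.
by rewrite !mulf_neq0 ?invr_neq0 ?mulf_neq0 ?detN_neq0 ?omega_neq0 ?lam_neq0.
Qed.

Definition T0 : 'M[K]_6 := \matrix_(i, j) (if j == sigma i then kap i else 0).

Lemma T0_entry (p : 'rV[K]_6) i : (p *m T0) 0 (sigma i) = p 0 i * kap i.
Proof.
rewrite mxE (bigD1 i) //= big1 ?addr0 ?mxE ?eqxx // => l li.
by rewrite mxE (inj_eq (@perm_inj _ sigma)) eq_sym (negbTE li) mulr0.
Qed.

Lemma T0_unit : T0 \in unitmx.
Proof.
rewrite -row_free_unit; apply: inj_row_free => v vT0.
apply/rowP => i; move/rowP/(_ (sigma i)): vT0.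
by rewrite T0_entry !mxE => /eqP; rewrite mulf_eq0 (negbTE (kap_neq0 i)) orbF => /eqP.
Qed.

Lemma bform_T0 m p :
  bform m (p *m T0) (p *m T0) = (\prod_l lam l) / detN ^+ 3 *
    \sum_i (omega theta i * p 0 i ^+ 2) * (theta (sigma i) ^+ m * lam i ^+ 2).
Proof.
rewrite /bform (reindex_inj (@perm_inj _ sigma)) /= mulr_sumr.
apply: eq_bigr => i _; rewrite T0_entry /kap (bigD1 i) //= -/(lam_prod i).
have -> : omega theta (sigma i) = detN ^+ 5 * omega theta i / (lam i ^+ 5 * lam_prod i).
  by rewrite -omega_sigma mulfK // mulf_neq0 ?expf_neq0 ?lam_neq0 ?lam_prod_neq0.
move: (theta (sigma i) ^+ m) (detN_neq0) (omega_neq0 i) (lam_neq0 i) (lam_prod_neq0 i).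
by move=> t d0 w0 l0 P0; field; rewrite d0 w0 l0 P0.
Qed.

(* T0 maps the intersection of the quadrics onto itself: the pulled-back
   forms are, up to a constant, sums of w_i times quadratic monomials in
   (lam_i, theta_(sigma i) lam_i), which are linear combinations of
   (1, theta_i) and conversely, since detN != 0. *)
Lemma on_quadrics_T0 p : on_quadrics (p *m T0) <-> on_quadrics p.
Proof.
pose w i := omega theta i * p 0 i ^+ 2.
have bform_w m : bform m p p = \sum_i w i * (1 ^+ (2 - m) * theta i ^+ m).
  by apply: eq_bigr => i _; rewrite expr1n mul1r /w; ring.
have bform_T0_w m : (m < 3)%N -> bform m (p *m T0) (p *m T0) =
    (\prod_l lam l) / detN ^+ 3 *
    \sum_i w i * (lam i ^+ (2 - m) * (theta (sigma i) * lam i) ^+ m).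
  move=> hm; rewrite bform_T0; congr (_ * _); apply: eq_bigr => i _.
  by congr (_ * _); rewrite exprMn [RHS]mulrCA -exprD subnK // -ltnS.
have C0 : (\prod_l lam l) / detN ^+ 3 != 0.
  rewrite mulf_neq0 ?invr_neq0 ?expf_neq0 ?detN_neq0 //.
  by apply/prodf_neq0 => l _; apply: lam_neq0.
split=> hq m hm.
- (* (detN, detN theta) is the image of (lam, theta_sigma lam) under N *)
  have vanish k : (k < 3)%N ->
      \sum_i w i * (lam i ^+ (2 - k) * (theta (sigma i) * lam i) ^+ k) = 0.
    move=> hk; apply/eqP; move: (hq k hk); rewrite bform_T0_w //.
    by move/eqP; rewrite mulf_eq0 (negbTE C0).
  have := binary_quadratic_sums (x := lam) (y := fun i => theta (sigma i) * lam i)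
    (N 0 0) (N 0 1) (N 1 0) (N 1 1) vanish hm.
  move=> h; apply: (mulIf (expf_neq0 2 detN_neq0)); rewrite mul0r -{}h bform_w mulr_suml.
  apply: eq_bigr => i _; rewrite theta_sigma_lam /lam /detN; move: (w i) => wi.
  by case: m hm => [|[|[|]]] // _; ring.
- (* (lam, theta_sigma lam) is the image of (1, theta) under the adjugate of N *)
  have vanish k : (k < 3)%N -> \sum_i w i * (1 ^+ (2 - k) * theta i ^+ k) = 0.
    by move=> hk; rewrite -bform_w hq.
  rewrite bform_T0_w //; apply/eqP; rewrite mulf_eq0; apply/orP; right; apply/eqP.
  apply: etrans (binary_quadratic_sums (y := theta)
    (N 1 1) (- N 0 1) (- N 1 0) (N 0 0) vanish hm).
  apply: eq_bigr => i _; rewrite theta_sigma_lam /lam; move: (w i) => wi.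
  by case: m hm => [|[|[|]]] // _; ring.
Qed.

Lemma embD_T0 u : embD u *m Phi *m T0 = embD (u *m N) *m Phi.
Proof.
apply/rowP => j; rewrite -(permKV sigma j) T0_entry !embD_Phi !mulmxN_entry.
set i := (sigma^-1)%g j.
move: (lam_neq0 i) (omega_neq0 i) (omega_neq0 (sigma i)) => l0 w0 ws0.
have -> : (u 0 0 * N 0 0 + u 0 1 * N 1 0 + (u 0 0 * N 0 1 + u 0 1 * N 1 1) * theta (sigma i))
    / omega theta (sigma i) =
  ((u 0 0 * N 0 0 + u 0 1 * N 1 0) * lam i +
   (u 0 0 * N 0 1 + u 0 1 * N 1 1) * (theta (sigma i) * lam i)) /
  (lam i * omega theta (sigma i)) by field; rewrite l0 ws0.
by rewrite theta_sigma_lam /kap /lam /detN; field; rewrite -/(lam i) l0 w0 ws0.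
Qed.

End Existence.

Lemma conj_inGL0 (T : 'M[K]_6) (N : 'M[K]_2) : N \in unitmx -> T \in unitmx ->
  (forall p, on_quadrics (p *m T) <-> on_quadrics p) ->
  (forall u, embD u *m Phi *m T = embD (u *m N) *m Phi) ->
  inGL0_S theta (Phi *m T *m invmx Phi) /\ restricts_to (Phi *m T *m invmx Phi) N.
Proof.
move=> N_unit T_unit T_quadrics T_Delta0; set M := Phi *m T *m invmx Phi.
have Phi_inv : invmx Phi \in unitmx by rewrite unitmx_inv Phi_unit.
have M_Phi v : v *m M *m Phi = v *m Phi *m T by rewrite !mulmxA mulmxKV ?Phi_unit.
have M_Delta0 u : embD u *m M = embD (u *m N) by rewrite !mulmxA T_Delta0 mulmxK ?Phi_unit.
have M_unit : M \in unitmx by rewrite !unitmx_mul Phi_unit T_unit.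
split; last by move=> u _; rewrite M_Delta0; apply: proj_eq_refl.
split; [split; [done | split] | split].
- move=> v /inS_Phi [v0 hv]; apply/inS_Phi.
  by rewrite M_Phi T_quadrics unitmx_row_neq0_mul.
- move=> w /inS_Phi [w0 hw]; exists (w *m invmx M).
    apply/inS_Phi; rewrite -T_quadrics -M_Phi mulmxKV //.
    by rewrite unitmx_row_neq0_mul ?unitmx_inv.
  by rewrite mulmxKV //; apply: proj_eq_refl.
- move=> v /inDelta0_embD [u u0 ->]; rewrite M_Delta0.
  exact/embD_inDelta0/unitmx_row_neq0_mul.
- move=> w /inDelta0_embD [u u0 ->]; exists (embD (u *m invmx N)).
    by apply/embD_inDelta0/unitmx_row_neq0_mul; rewrite ?unitmx_inv.
  by rewrite M_Delta0 mulmxKV //; apply: proj_eq_refl.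
Qed.

(* Uniqueness: two elements of GL(S) restricting to the same map on Delta_0
   agree projectively, since M1 M2^-1 is, in pi-coordinates, a matrix that
   maps the quadrics into themselves and fixes Delta_0, hence a scalar. *)
Lemma restriction_unique (N : 'M[K]_2) (M1 M2 : 'M[K]_6) :
  (2%:R : K) != 0 ->
  inGL_S theta M1 -> restricts_to M1 N -> inGL_S theta M2 -> restricts_to M2 N ->
  forall v, inS theta v -> proj_eq (v *m M1) (v *m M2).
Proof.
move=> two_neq0 [M1_unit [M1_S _]] M1_N [M2_unit [_ M2_S]] M2_N v vS.
pose T := invmx Phi *m M1 *m invmx M2 *m Phi.
have T_mul p : p *m T = p *m invmx Phi *m M1 *m invmx M2 *m Phi by rewrite !mulmxA.
have T_unit : T \in unitmx by rewrite !unitmx_mul !unitmx_inv Phi_unit M1_unit M2_unit.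
have T_quadrics p : on_quadrics p -> on_quadrics (p *m T).
  have [-> on0|p0 hp] := eqVneq p 0; first by rewrite mul0mx.
  have pS : inS theta (p *m invmx Phi).
    by apply/inS_Phi; rewrite mulmxKV ?Phi_unit ?unitmx_row_neq0_mul ?unitmx_inv ?Phi_unit.
  have [w /inS_Phi [_ hw] [k k0 wk]] := M2_S _ (M1_S _ pS).
  rewrite T_mul -[_ *m M1](scalerK k0) -wk -scalemxAl mulmxK //.
  by rewrite -scalemxAl; apply: on_quadricsZ.
have T_fixes u : u != 0 -> proj_eq (embD u *m Phi *m T) (embD u *m Phi).
  move=> u0; have [a a0 M1u] := M1_N u u0; have [b b0 M2u] := M2_N u u0.
  exists (a / b); first by rewrite mulf_neq0 ?invr_neq0.
  rewrite T_mul mulmxK ?Phi_unit // M1u -[embD (u *m N)](scalerK b0) -M2u.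
  by rewrite scalerA -!scalemxAl mulmxK.
have [l l0 Tl] := scalar_of_fixing_Delta0 two_neq0 T_unit T_quadrics T_fixes.
exists l => //.
have : Phi *m T *m invmx Phi = M1 *m invmx M2.
  by rewrite /T !mulmxA mulmxV ?Phi_unit // mul1mx mulmxK ?Phi_unit.
rewrite Tl -scalemx1 -scalemxAr mulmx1 -scalemxAl mulmxV ?Phi_unit // => M12.
by rewrite -[M1](mulmxKV M2_unit) -M12 -scalemxAl mul1mx scalemxAr.
Qed.

End Coordinates.

Theorem mainTheorem12
  (K : closedFieldType) (char_not2 : (2%:R : K) != 0)
  (F : {poly K}) (sizeF : size F = 7%N)
  (theta : 'I_6 -> K) (theta_inj : injective theta)
  (theta_roots : forall i, root F (theta i))
  (sigma : 'S_6) (N : 'M[K]_2) (N_unit : N \in unitmx)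
  (hB : forall i : 'I_6, proj_eq (ptD theta i *m N) (ptD theta (sigma i))) :
  (exists M : 'M[K]_6, inGL0_S theta M /\ restricts_to M N) /\
  (forall M1 M2 : 'M[K]_6,
     inGL0_S theta M1 -> restricts_to M1 N ->
     inGL0_S theta M2 -> restricts_to M2 N ->
     forall v, inS theta v -> proj_eq (v *m M1) (v *m M2)).
Proof.
split.
- exists (Phi theta *m T0 theta sigma N *m invmx (Phi theta)).
  apply: conj_inGL0 => //; first exact: T0_unit.
  + exact: on_quadrics_T0.
  + exact: embD_T0.
- move=> M1 M2 [M1_GL _] M1_N [M2_GL _] M2_N.
  exact: restriction_unique char_not2 M1_GL M1_N M2_GL M2_N.
Qed.
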